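(* For all positive integers $d,m,r$ and every $\varepsilon>0$, $\mathbf{n}_{\mathrm{pol}}(d,m,r,\varepsilon)=\mathbf{n}_\infty(d,m,r,\varepsilon)$.
   Context: Spaces are real finite-dimensional normed spaces. A finite-dimensional normed space $F$ is polyhedral if its closed unit ball has finitely many extreme points; $\mathrm{Pol}_d$ is the class of polyhedral spaces $F$ whose dual unit ball $B_{F^*}$ has exactly $2d$ extreme points (e.g. $\ell_\infty^d\in\mathrm{Pol}_d$). $\mathrm{Emb}(X,Y)$ is the set of linear isometric embeddings with the operator-norm metric. An $r$-coloring is a map into $\{0,\dots,r-1\}$; a subset $F$ of the colored space $M$ is $\varepsilon$-monochromatic if for some color $i$ every element of $F$ is within distance $\varepsilon$ of an element of $M$ of color $i$. $\mathbf{n}_\infty(d,m,r,\varepsilon)$ is the least $n$ such that every $r$-coloring of $\mathrm{Emb}(\ell_\infty^d,\ell_\infty^n)$ has an $\varepsilon$-monochromatic set $\gamma\circ\mathrm{Emb}(\ell_\infty^d,\ell_\infty^m)$ for some $\gamma\in\mathrm{Emb}(\ell_\infty^m,\ell_\infty^n)$. $\mathbf{n}_{\mathrm{pol}}(d,m,r,\varepsilon)$ is the least $n\ge m$ such that for all $F\in\mathrm{Pol}_d$ and $G\in\mathrm{Pol}_m$, every $r$-coloring of $\mathrm{Emb}(F,\ell_\infty^n)$ has an $\varepsilon$-monochromatic set $T\circ\mathrm{Emb}(F,G)$ for some $T\in\mathrm{Emb}(G,\ell_\infty^n)$. *)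

(* real finite-dimensional normed spaces are modelled as
   row-vector spaces 'rV[R]_k equipped with a norm function, R : realType. *)
From HB Require Import structures.
From mathcomp Require Import all_boot all_order all_algebra.
From mathcomp Require Import reals.
Set Implicit Arguments. Unset Strict Implicit. Unset Printing Implicit Defensive.
Import Order.TTheory GRing.Theory Num.Theory.
Local Open Scope ring_scope.

Section Defs.
Variable R : realType.

Definition is_norm (k : nat) (N : 'rV[R]_k -> R) : Prop :=
  [/\ forall x, N x = 0 -> x = 0,
      forall (a : R) x, N (a *: x) = `|a| * N x &
      forall x y, N (x + y) <= N x + N y].

Definition extreme_point (k : nat) (C : 'rV[R]_k -> Prop) (x : 'rV[R]_k) : Prop :=
  C x /\ forall y z (t : R), C y -> C z -> 0 < t -> t < 1 ->
    x = t *: y + (1 - t) *: z -> y = z.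

Definition unit_ball (k : nat) (N : 'rV[R]_k -> R) (x : 'rV[R]_k) : Prop :=
  N x <= 1.

(* pairing of a functional f (identified with a row vector) with x *)
Definition pairing (k : nat) (f x : 'rV[R]_k) : R := \sum_(i < k) f 0 i * x 0 i.

Definition dual_unit_ball (k : nat) (N : 'rV[R]_k -> R) (f : 'rV[R]_k) : Prop :=
  forall x, N x <= 1 -> pairing f x <= 1.

Definition finitely_many_extreme (k : nat) (C : 'rV[R]_k -> Prop) : Prop :=
  exists s : seq 'rV[R]_k, forall x, extreme_point C x -> x \in s.

Definition exactly_n_extreme (k : nat) (C : 'rV[R]_k -> Prop) (n : nat) : Prop :=
  exists s : seq 'rV[R]_k,
    [/\ uniq s, size s = n & forall x, extreme_point C x <-> x \in s].

Definition polyhedral (k : nat) (N : 'rV[R]_k -> R) : Prop :=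
  finitely_many_extreme (unit_ball N).

Definition Pol (d : nat) (k : nat) (N : 'rV[R]_k -> R) : Prop :=
  polyhedral N /\ exactly_n_extreme (dual_unit_ball N) (2 * d)%N.

Definition linf (n : nat) (x : 'rV[R]_n) : R := \big[Num.max/0]_(i < n) `|x 0 i|.

(* linear isometric embeddings (linear maps act on row vectors on the right) *)
Definition is_emb (k l : nat) (NF : 'rV[R]_k -> R) (NG : 'rV[R]_l -> R)
  (T : 'M[R]_(k, l)) : Prop := forall x, NG (x *m T) = NF x.

Definition opdist_le (k n : nat) (NF : 'rV[R]_k -> R) (T S : 'M[R]_(k, n)) (e : R)
  : Prop := forall x, NF x <= 1 -> linf (x *m (T - S)) <= e.

Definition eps_mono (k n r : nat) (NF : 'rV[R]_k -> R) (c : 'M[R]_(k, n) -> 'I_r)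
  (A : 'M[R]_(k, n) -> Prop) (e : R) : Prop :=
  exists i : 'I_r, forall S, A S ->
    exists S', [/\ is_emb NF (@linf n) S', c S' = i & opdist_le NF S S' e].

Definition comp_emb (k l n : nat) (NF : 'rV[R]_k -> R) (NG : 'rV[R]_l -> R)
  (T : 'M[R]_(l, n)) (S : 'M[R]_(k, n)) : Prop :=
  exists Phi : 'M[R]_(k, l), is_emb NF NG Phi /\ S = Phi *m T.

Definition P_inf (d m r : nat) (e : R) (n : nat) : Prop :=
  forall c : 'M[R]_(d, n) -> 'I_r,
    exists gamma : 'M[R]_(m, n),
      is_emb (@linf m) (@linf n) gamma /\
      eps_mono (@linf d) c (comp_emb (@linf d) (@linf m) gamma) e.

Definition P_pol (d m r : nat) (e : R) (n : nat) : Prop :=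
  (m <= n)%N /\
  forall (kF : nat) (NF : 'rV[R]_kF -> R), is_norm NF -> Pol d NF ->
  forall (kG : nat) (NG : 'rV[R]_kG -> R), is_norm NG -> Pol m NG ->
  forall c : 'M[R]_(kF, n) -> 'I_r,
    exists T : 'M[R]_(kG, n),
      is_emb NG (@linf n) T /\ eps_mono NF c (comp_emb NF NG T) e.

Definition is_least (P : nat -> Prop) (n : nat) : Prop :=
  P n /\ forall k, P k -> (n <= k)%N.

End Defs.

(** A space F in Pol_d embeds isometrically into l_oo^d by x |-> (f_i x)_i,
    where f_1, ..., f_d represent the d antipodal pairs of extreme points of
    B_{F*}: every x is normed by an extreme functional, obtained by the
    finite-dimensional Hahn-Banach argument (lowering a sublinear functional
    along x and then along a basis leaves a linear functional, which is extreme
    among those below it).  An isometric embedding Phi : F -> G, G in Pol_m,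
    then lifts to an isometric A : l_oo^d -> l_oo^m commuting with these
    coordinate embeddings: column j of A extends g_j o Phi, and is chosen to be
    exactly +-e_i when g_j o Phi = +-f_i.  Each f_i does occur in this way:
    extending f_i through Phi and then through G -> l_oo^m writes it as a
    combination sum_j b_j (g_j o Phi) with sum_j |b_j| <= 1, and an extreme
    point admits no such decomposition with other summands.  So colorings of
    Emb(F, l_oo^n) pull back to colorings of Emb(l_oo^d, l_oo^n), and since
    l_oo^k is itself in Pol_k, the Ramsey properties defining n_pol and n_oo
    hold for exactly the same n. *)

From Pilot Require Import Defs.
From HB Require Import structures.
From mathcomp Require Import all_boot all_order all_algebra.
From mathcomp Require Import boolp reals.
From mathcomp Require Import lra zify.
Set Implicit Arguments. Unset Strict Implicit. Unset Printing Implicit Defensive.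
Import Order.TTheory GRing.Theory Num.Theory.
Local Open Scope ring_scope.

Section Pairing.
Variables (R : realType) (k : nat).
Implicit Types f g x y : 'rV[R]_k.

Lemma pairingC f x : pairing f x = pairing x f.
Proof. by apply: eq_bigr => i _; rewrite mulrC. Qed.

Lemma pairingDr f x y : pairing f (x + y) = pairing f x + pairing f y.
Proof. by rewrite /pairing -big_split; apply: eq_bigr => i _; rewrite mxE mulrDr. Qed.

Lemma pairingZr f a x : pairing f (a *: x) = a * pairing f x.
Proof. by rewrite /pairing mulr_sumr; apply: eq_bigr => i _; rewrite mxE mulrCA. Qed.

Lemma pairingNr f x : pairing f (- x) = - pairing f x.
Proof. by rewrite -scaleN1r pairingZr mulN1r. Qed.

Lemma pairing0r f : pairing f 0 = 0.
Proof. by rewrite -(scale0r 0) pairingZr mul0r. Qed.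

Lemma pairingDl f g x : pairing (f + g) x = pairing f x + pairing g x.
Proof. by rewrite !(pairingC _ x) pairingDr. Qed.

Lemma pairingZl a f x : pairing (a *: f) x = a * pairing f x.
Proof. by rewrite !(pairingC _ x) pairingZr. Qed.

Lemma pairingNl f x : pairing (- f) x = - pairing f x.
Proof. by rewrite !(pairingC _ x) pairingNr. Qed.

Lemma pairing_suml (I : Type) (r : seq I) (P : pred I) (F : I -> 'rV[R]_k) x :
  pairing (\sum_(i <- r | P i) F i) x = \sum_(i <- r | P i) pairing (F i) x.
Proof.
by apply: (big_morph (fun f => pairing f x)) => [f g|]; rewrite ?pairingDl // pairingC pairing0r.
Qed.

Lemma pairing_deltar f i : pairing f (delta_mx 0 i) = f 0 i.
Proof.
rewrite /pairing (bigD1 i) //= mxE !eqxx mulr1 big1 ?addr0 // => j ji.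
by rewrite mxE (negbTE ji) mulr0.
Qed.

Lemma pairing_deltal f i : pairing (delta_mx 0 i) f = f 0 i.
Proof. by rewrite pairingC pairing_deltar. Qed.

Lemma pairing_inj f g : (forall x, pairing f x = pairing g x) -> f = g.
Proof. by move=> fg; apply/rowP => i; rewrite -!pairing_deltar. Qed.

End Pairing.

Lemma pairing_mulmx (R : realType) k l (f : 'rV[R]_l) (x : 'rV[R]_k) (M : 'M[R]_(k, l)) :
  pairing f (x *m M) = pairing (f *m M^T) x.
Proof.
rewrite /pairing; under eq_bigr do rewrite mxE mulr_sumr.
rewrite exchange_big; apply: eq_bigr => i _; rewrite mxE mulr_suml.
by apply: eq_bigr => j _; rewrite mxE mulrCA mulrC.
Qed.

Section InfOver.
Variables (R : realType) (X : Type) (P : X -> Prop) (F : X -> R).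

Definition inf_over : R := inf (fun y => exists2 x, P x & F x = y).

Lemma inf_over_le b x : (forall x, P x -> b <= F x) -> P x -> inf_over <= F x.
Proof. by move=> Fb Px; apply: ge_inf; [exists b => _ [z Pz <-]; apply: Fb | exists x]. Qed.

Lemma le_inf_over c x0 : P x0 -> (forall x, P x -> c <= F x) -> c <= inf_over.
Proof. by move=> Px0 cF; apply: lb_le_inf; [exists (F x0), x0 | move=> _ [x Px <-]; apply: cF]. Qed.

End InfOver.

Section Sublinear.
Variables (R : realType) (k : nat).
Implicit Types (p : 'rV[R]_k -> R) (f x y : 'rV[R]_k).

Definition sublinear p :=
  (forall x y, p (x + y) <= p x + p y) /\ (forall a x, 0 <= a -> p (a *: x) = a * p x).

Definition dominated p f := forall x, pairing f x <= p x.

Lemma sublinD p (hp : sublinear p) x y : p (x + y) <= p x + p y.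
Proof. exact: hp.1. Qed.

Lemma sublinZ p (hp : sublinear p) a x : 0 <= a -> p (a *: x) = a * p x.
Proof. exact: hp.2. Qed.

Lemma sublin0 p : sublinear p -> p 0 = 0.
Proof. by move=> hp; rewrite -(scale0r 0) (sublinZ hp) // mul0r. Qed.

Lemma sublin_oppr p x : sublinear p -> - p (- x) <= p x.
Proof. by move=> hp; have := sublinD hp x (- x); rewrite subrr sublin0 //; lra. Qed.

End Sublinear.

Section InfConvolution.
Variables (R : realType) (k l : nat) (C : pred 'rV[R]_l) (M : 'M[R]_(l, k)).
Variables (h : 'rV[R]_l) (p : 'rV[R]_k -> R).
Hypothesis hp : sublinear p.
Hypothesis C0 : C 0.
Hypothesis CD : forall x y, C x -> C y -> C (x + y).
Hypothesis CZ : forall a x, 0 <= a -> C x -> C (a *: x).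
Hypothesis hC : forall x, C x -> pairing h x <= p (x *m M).

Definition inf_conv (w : 'rV[R]_k) : R :=
  inf_over C (fun x => p (w + x *m M) - pairing h x).

Lemma inf_conv_le w x : C x -> inf_conv w <= p (w + x *m M) - pairing h x.
Proof.
move=> Cx; apply: (inf_over_le (b := - p (- w))) => // {Cx}x Cx.
have := sublinD hp (w + x *m M) (- w); rewrite addrC addKr.
by have := hC Cx; lra.
Qed.

Lemma le_inf_conv w c :
  (forall x, C x -> c <= p (w + x *m M) - pairing h x) -> c <= inf_conv w.
Proof. exact: (@le_inf_over _ _ (fun x => C x) _ c 0). Qed.

Lemma inf_conv_le_self w : inf_conv w <= p w.
Proof. by have := inf_conv_le w C0; rewrite mul0mx addr0 pairing0r subr0. Qed.

Lemma sublinear_inf_conv : sublinear inf_conv.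
Proof.
split=> [w1 w2 | a w].
  rewrite -lerBlDr; apply: le_inf_conv => x1 Cx1.
  rewrite lerBlDr -lerBlDl; apply: le_inf_conv => x2 Cx2; rewrite lerBlDl.
  apply: le_trans (inf_conv_le _ (CD Cx1 Cx2)) _.
  rewrite mulmxDl pairingDr addrACA.
  by have := sublinD hp (w1 + x1 *m M) (w2 + x2 *m M); lra.
rewrite le0r => /orP[/eqP-> | a0].
  rewrite scale0r mul0r; apply/eqP; rewrite eq_le; apply/andP; split.
    by rewrite -(sublin0 hp) inf_conv_le_self.
  by apply: (le_inf_conv (w := 0)) => x Cx; rewrite add0r subr_ge0 hC.
have a_neq0 : a != 0 by rewrite lt0r_neq0.
apply/eqP; rewrite eq_le; apply/andP; split.
  rewrite -ler_pdivrMl //; apply: (le_inf_conv (w := w)) => x Cx; rewrite ler_pdivrMl //.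
  apply: le_trans (inf_conv_le _ (CZ (ltW a0) Cx)) _.
  by rewrite -scalemxAl -scalerDr (sublinZ hp _ (ltW a0)) pairingZr mulrBr.
apply: (le_inf_conv (w := a *: w)) => x Cx.
have a'0 : 0 <= a^-1 by rewrite invr_ge0 ltW.
have := inf_conv_le w (CZ a'0 Cx); rewrite -(ler_pM2l a0).
move/le_trans; apply; rewrite -scalemxAl.
have -> : w + a^-1 *: (x *m M) = a^-1 *: (a *: w + x *m M).
  by rewrite scalerDr scalerA mulVf // scale1r.
by rewrite (sublinZ hp _ a'0) pairingZr -mulrBr mulrA mulfV // mul1r.
Qed.

Lemma dominated_inf_conv f : dominated p f ->
  (forall x, C x -> pairing h x <= pairing f (x *m M)) -> dominated inf_conv f.
Proof.
move=> fp fC w; apply: le_inf_conv => x Cx.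
by have := fp (w + x *m M); rewrite pairingDr; have := fC x Cx; lra.
Qed.

End InfConvolution.

Section Cut.
Variables (R : realType) (k : nat).
Implicit Types (p : 'rV[R]_k -> R) (f v y : 'rV[R]_k).

Definition nonneg_ray : pred 'rV[R]_1 := fun t => 0 <= t 0 0.

(* [cut v p y = inf_(t >= 0) p (y + t v) - t p v], the ray being parametrised
   by the 1x1 matrices [t] with [t *m v = t 0 0 *: v]. *)
Definition cut v p := inf_conv nonneg_ray v (p v)%:M p.

Lemma ray_mulmx (t : 'rV[R]_1) v : t *m v = t 0 0 *: v.
Proof. by rewrite {1}[t]mx11_scalar mul_scalar_mx. Qed.

Lemma pairing_ray (a : R) (t : 'rV[R]_1) : pairing a%:M t = a * t 0 0.
Proof. by rewrite /pairing big_ord1 mxE mulr1n. Qed.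

Variables (v : 'rV[R]_k) (p : 'rV[R]_k -> R).
Hypothesis hp : sublinear p.

Let ray0 : nonneg_ray 0.
Proof. by rewrite /nonneg_ray mxE. Qed.

Let rayD t s : nonneg_ray t -> nonneg_ray s -> nonneg_ray (t + s).
Proof. by rewrite /nonneg_ray mxE; apply: addr_ge0. Qed.

Let rayZ a t : 0 <= a -> nonneg_ray t -> nonneg_ray (a *: t).
Proof. by rewrite /nonneg_ray mxE; apply: mulr_ge0. Qed.

Let ray_dom t : nonneg_ray t -> pairing (p v)%:M t <= p (t *m v).
Proof. by move=> t0; rewrite pairing_ray ray_mulmx (sublinZ hp _ t0) mulrC. Qed.

Lemma cut_le_shift y t : 0 <= t -> cut v p y <= p (y + t *: v) - t * p v.
Proof.
move=> t0; have rt : nonneg_ray t%:M by rewrite /nonneg_ray mxE mulr1n.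
by have := inf_conv_le hp ray_dom y rt; rewrite ray_mulmx pairing_ray !mxE mulr1n mulrC.
Qed.

Lemma cut_le y : cut v p y <= p y.
Proof. exact: inf_conv_le_self hp ray0 ray_dom y. Qed.

Lemma cut_oppr : cut v p (- v) <= - p v.
Proof. by have := cut_le_shift (- v) ler01; rewrite scale1r addNr sublin0 // mul1r sub0r. Qed.

Lemma sublinear_cut : sublinear (cut v p).
Proof. exact: sublinear_inf_conv hp ray0 rayD rayZ ray_dom. Qed.

Lemma dominated_cut f : dominated p f -> pairing f v = p v -> dominated (cut v p) f.
Proof.
move=> fp fv; apply: (dominated_inf_conv ray0 fp) => t _.
by rewrite pairing_ray ray_mulmx pairingZr fv mulrC.
Qed.

End Cut.

Section HahnBanach.
Variables (R : realType) (k : nat).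
Implicit Types (p q : 'rV[R]_k -> R) (f y z : 'rV[R]_k) (vs : seq 'rV[R]_k).

Definition linearize vs p := foldl (fun q v => cut v q) p vs.

Lemma sublinear_linearize vs p : sublinear p -> sublinear (linearize vs p).
Proof. by elim: vs p => //= v vs IH p hp; apply/IH/sublinear_cut. Qed.

Lemma linearize_le vs p y : sublinear p -> linearize vs p y <= p y.
Proof.
elim: vs p => //= v vs IH p hp.
exact: le_trans (IH _ (sublinear_cut v hp)) (cut_le v hp y).
Qed.

Lemma linearize_cut_ge vs p v : sublinear p -> p v <= linearize vs (cut v p) v.
Proof.
move=> hp; have hq := sublinear_linearize vs (sublinear_cut v hp).
have := linearize_le vs (- v) (sublinear_cut v hp).
by have := cut_oppr v hp; have := sublin_oppr v hq; lra.
Qed.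

Lemma linearize_oppr vs p v : sublinear p -> v \in vs ->
  linearize vs p (- v) <= - linearize vs p v.
Proof.
elim: vs p => //= w vs IH p hp; rewrite in_cons => /orP[/eqP-> | vvs]; last first.
  exact: IH (sublinear_cut w hp) vvs.
have := linearize_le vs (- w) (sublinear_cut w hp).
have := linearize_le vs w (sublinear_cut w hp).
by have := cut_oppr w hp; have := cut_le w hp w; lra.
Qed.

Lemma dominated_linearize_comb vs p y z t : sublinear p ->
  dominated p y -> dominated p z -> 0 < t -> t < 1 ->
  (forall u, t * pairing y u + (1 - t) * pairing z u = linearize vs p u) ->
  dominated (linearize vs p) y /\ dominated (linearize vs p) z.
Proof.
elim: vs p => //= v vs IH p hp yp zp t0 t1 yzq.
(* At v the combination is at least p v while y and z are at most p v. *)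
have := yzq v; have := yp v; have := zp v; have := linearize_cut_ge vs v hp.
move=> qv zv yv yzv; have yv' : pairing y v = p v by nra.
have zv' : pairing z v = p v by nra.
by apply: IH => //; [exact: sublinear_cut | exact: dominated_cut | exact: dominated_cut].
Qed.

Lemma sublinear_pairingE q : sublinear q ->
  (forall i, q (- delta_mx 0 i) <= - q (delta_mx 0 i)) ->
  forall y, q y = pairing (\row_i q (delta_mx 0 i)) y.
Proof.
move=> hq qN; set f := \row_i _.
have qZ a i : q (a *: delta_mx 0 i) <= a * q (delta_mx 0 i).
  have [a0|a0] := leP 0 a; first by rewrite (sublinZ hq _ a0).
  rewrite -[a]opprK scaleNr -scalerN (sublinZ hq) ?oppr_ge0 ?(ltW a0) //.
  by have := qN i; nra.
have qf y : q y <= pairing f y.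
  rewrite {1}[y]row_sum_delta /pairing.
  elim/big_ind2: _ => [|y1 a1 y2 a2 h1 h2|i _]; first by rewrite sublin0.
    exact: le_trans (sublinD hq _ _) (lerD h1 h2).
  by rewrite mxE mulrC qZ.
move=> y; apply/eqP; rewrite eq_le qf /=.
by have := qf (- y); have := sublin_oppr y hq; rewrite pairingNr; lra.
Qed.

Theorem exists_extreme_dominated p x : sublinear p ->
  exists f, extreme_point (dominated p) f /\ pairing f x = p x.
Proof.
move=> hp; set q := linearize (x :: [seq delta_mx 0 i | i <- enum 'I_k]) p.
have hq : sublinear q by apply: sublinear_linearize.
have qN i : q (- delta_mx 0 i) <= - q (delta_mx 0 i).
  by apply: linearize_oppr; rewrite // inE map_f ?orbT ?mem_enum.
set f := \row_i q (delta_mx 0 i).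
have qf := sublinear_pairingE hq qN; rewrite -/f in qf.
have dom_q g : dominated q g -> g = f.
  move=> gq; apply: pairing_inj => u; apply/eqP; rewrite eq_le.
  by have := gq u; have := gq (- u); rewrite (qf u) (qf (- u)) !pairingNr; lra.
exists f; split; last first.
  have qx : p x <= q x := linearize_cut_ge _ x hp.
  by apply/eqP; rewrite eq_le -qf qx linearize_le.
split=> [u | y z t yp zp t0 t1 fyz]; first by rewrite -qf linearize_le.
have yzq u : t * pairing y u + (1 - t) * pairing z u = q u.
  by rewrite qf fyz pairingDl !pairingZl.
have [yq zq] := dominated_linearize_comb hp yp zp t0 t1 yzq.
by rewrite (dom_q _ yq) (dom_q _ zq).
Qed.

Theorem dominated_extension l p (M : 'M[R]_(l, k)) h : sublinear p ->
  (forall x, pairing h x <= p (x *m M)) ->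
  exists b, dominated p b /\ forall x, pairing b (x *m M) = pairing h x.
Proof.
move=> hp hM; set C : pred 'rV[R]_l := predT.
have hC x : C x -> pairing h x <= p (x *m M) by move=> _; apply: hM.
set r := inf_conv C M h p.
have hr : sublinear r by apply: sublinear_inf_conv.
have [b [[br _] _]] := exists_extreme_dominated 0 hr.
have rM u : r (u *m M) <= pairing h u.
  have := inf_conv_le hp hC (u *m M) (isT : C (- u)).
  by rewrite mulNmx subrr sublin0 // pairingNr sub0r opprK.
exists b; split=> [w | u]; first exact: le_trans (br w) (inf_conv_le_self hp _ hC w).
apply/eqP; rewrite eq_le (le_trans (br _) (rM u)) /=.
by have := le_trans (br _) (rM (- u)); rewrite mulNmx !pairingNr lerN2.
Qed.

End HahnBanach.

Lemma extreme_midpoint (R : realType) k (C : 'rV[R]_k -> Prop) x y z :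
  extreme_point C x -> C y -> C z -> y + z = 2 *: x -> y = z.
Proof.
case=> _ xext Cy Cz yzx; apply: (xext _ _ 2^-1) => //.
- by rewrite invr_gt0.
- by rewrite invf_lt1 ?ltr1n.
rewrite (_ : 1 - 2^-1 = 2^-1); last by lra.
by rewrite -scalerDr yzx scalerA mulVf ?scale1r ?pnatr_eq0.
Qed.

Section Norm.
Variables (R : realType) (k : nat) (N : 'rV[R]_k -> R).
Hypothesis hN : is_norm N.
Implicit Types (f g x : 'rV[R]_k).

Lemma normZ a x : N (a *: x) = `|a| * N x.
Proof. by case: hN. Qed.

Lemma sublinear_norm : sublinear N.
Proof. by case: hN => _ _ ND; split=> // a x a0; rewrite normZ ger0_norm. Qed.

Lemma normN x : N (- x) = N x.
Proof. by rewrite -scaleN1r normZ normrN normr1 mul1r. Qed.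

Lemma norm_ge0 x : 0 <= N x.
Proof. by have := sublin_oppr x sublinear_norm; rewrite normN; lra. Qed.

Lemma dual_unit_ballE : dual_unit_ball N = dominated N.
Proof.
apply/funext => f; apply/propext; split=> [fN x | fN x Nx]; last exact: le_trans (fN x) Nx.
have [Nx0 | Nx_neq0] := eqVneq (N x) 0.
  have x0 : x = 0 by case: hN => /(_ x Nx0).
  by rewrite Nx0 x0 pairing0r.
have Nx0 : 0 < N x by rewrite lt_neqAle eq_sym Nx_neq0 norm_ge0.
have := fN ((N x)^-1 *: x); rewrite pairingZr normZ ger0_norm ?invr_ge0 ?norm_ge0 //.
by rewrite mulVf // lexx ler_pdivrMl // mulr1; apply.
Qed.

Lemma dominated_abs f x : dominated N f -> `|pairing f x| <= N x.
Proof. by move=> fN; rewrite ler_norml fN andbT lerNl -pairingNr -normN fN. Qed.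

Lemma dominatedZ a f : `|a| <= 1 -> dominated N f -> dominated N (a *: f).
Proof.
move=> a1 fN x; rewrite pairingZl (le_trans (ler_norm _)) // normrM.
by rewrite -[N x]mul1r ler_pM ?normr_ge0 ?dominated_abs.
Qed.

Lemma dominatedN f : dominated N f -> dominated N (- f).
Proof. by rewrite -scaleN1r; apply: dominatedZ; rewrite normrN normr1. Qed.

Lemma extreme_dominatedN f :
  extreme_point (dominated N) f -> extreme_point (dominated N) (- f).
Proof.
case=> fN fext; split=> [|y z t yN zN t0 t1 fyz]; first exact: dominatedN.
apply: oppr_inj; apply: (fext _ _ t (dominatedN yN) (dominatedN zN) t0 t1).
by rewrite -[f]opprK fyz opprD -!scalerN.
Qed.

Lemma extreme_dominated_neq0 f g : dominated N g -> g != 0 ->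
  extreme_point (dominated N) f -> f != 0.
Proof.
move=> gN g0 fext; apply: contraNneq g0 => f0.
have := extreme_midpoint fext gN (dominatedN gN); rewrite subrr f0 scaler0.
by move=> /(_ erefl)/eqP; rewrite -addr_eq0 -mulr2n -scaler_nat scaler_eq0 pnatr_eq0.
Qed.

Lemma extreme_dominated_comb f (I : finType) (lam : I -> R) (g : I -> 'rV[R]_k) i0 :
  extreme_point (dominated N) f -> (forall i, 0 <= lam i) -> \sum_i lam i <= 1 ->
  (forall i, dominated N (g i)) -> f = \sum_i lam i *: g i -> 0 < lam i0 -> g i0 = f.
Proof.
move=> [fN fext] lam0 lam1 gN fE lam_i0.
rewrite (bigD1 i0) //= in lam1; rewrite (bigD1 i0) //= in fE.
have rest_ge0 : 0 <= \sum_(i | i != i0) lam i by apply: sumr_ge0.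
have [lam_i0_1 | lam_i0_neq1] := eqVneq (lam i0) 1.
  suff rest0 : \sum_(i | i != i0) lam i *: g i = 0.
    by rewrite fE rest0 addr0 lam_i0_1 scale1r.
  have sum0 : \sum_(i | i != i0) lam i = 0 by apply/eqP; rewrite eq_le rest_ge0; lra.
  by apply: big1 => i ii0; rewrite (psumr_eq0P (fun i _ => lam0 i) sum0) ?scale0r.
have lam_i0_lt1 : lam i0 < 1 by rewrite lt_neqAle lam_i0_neq1; lra.
set w := (1 - lam i0)^-1 *: \sum_(i | i != i0) lam i *: g i.
have wN : dominated N w.
  move=> u; rewrite pairingZl pairing_suml ler_pdivrMl ?subr_gt0 //.
  apply: le_trans (_ : (\sum_(i | i != i0) lam i) * N u <= _); last first.
    by rewrite ler_wpM2r ?norm_ge0 //; lra.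
  rewrite mulr_suml; apply: ler_sum => i _.
  by rewrite pairingZl ler_wpM2l ?gN.
have fw : f = lam i0 *: g i0 + (1 - lam i0) *: w.
  by rewrite fE /w scalerA mulfV ?scale1r // subr_eq0 eq_sym.
have gw := fext _ _ _ (gN i0) wN lam_i0 lam_i0_lt1 fw.
by rewrite fw -gw -scalerDl addrC subrK scale1r.
Qed.

Lemma extreme_dominated_signed_comb f (I : finType) (b : I -> R) (h : I -> 'rV[R]_k) :
  extreme_point (dominated N) f -> f != 0 -> \sum_i `|b i| <= 1 ->
  (forall i, dominated N (h i)) -> f = \sum_i b i *: h i ->
  exists i, h i = f \/ h i = - f.
Proof.
move=> fext f0 b1 hN' fE.
have [i bi0] : exists i, b i != 0.
  apply/not_existsP => b0; move: f0; rewrite fE big1 ?eqxx // => i _.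
  by have /negP/negbNE/eqP-> := b0 i; rewrite scale0r.
have sgN j : dominated N (Num.sg (b j) *: h j).
  by apply: dominatedZ; rewrite ?normr_sg; case: (b j != 0); rewrite ?ler01.
have fE' : f = \sum_i `|b i| *: (Num.sg (b i) *: h i).
  by rewrite fE; apply: eq_bigr => j _; rewrite scalerA mulrC -numEsg.
have := extreme_dominated_comb fext (fun j => normr_ge0 _) b1 sgN fE'.
move=> /(_ i); rewrite normr_gt0 bi0 => /(_ isT) hf; exists i.
move: bi0; rewrite neq_lt => /orP[bn | bp].
  by right; rewrite -hf ltr0_sg // scaleN1r opprK.
by left; rewrite -hf gtr0_sg // scale1r.
Qed.

Lemma exists_extreme_norming x :
  exists f, extreme_point (dominated N) f /\ pairing f x = N x.
Proof. exact: exists_extreme_dominated x sublinear_norm. Qed.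

End Norm.

Section Linf.
Variables (R : realType) (n : nat).
Implicit Types (x y z : 'rV[R]_n).
Local Notation linf := (@linf R n).

Lemma ler_abs_linf x i : `|x 0 i| <= linf x.
Proof. exact: le_bigmax. Qed.

Lemma linf_le x c : 0 <= c -> (forall i, `|x 0 i| <= c) -> linf x <= c.
Proof. by move=> c0 xc; apply: bigmax_le. Qed.

Lemma linf_ge0 x : 0 <= linf x.
Proof. exact: bigmax_ge_id. Qed.

Lemma linf_attained x : (0 < n)%N -> exists i, linf x = `|x 0 i|.
Proof.
move=> n0; rewrite /Defs.linf.
have [i _ ->] := eq_bigmax (Ordinal n0) xpredT (fun i => `|x 0 i|) isT (fun i _ => normr_ge0 _).
by exists i.
Qed.

Lemma linfZ_le a x : linf (a *: x) <= `|a| * linf x.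
Proof.
apply: linf_le => [|i]; first by rewrite mulr_ge0 ?linf_ge0.
by rewrite mxE normrM ler_wpM2l ?ler_abs_linf.
Qed.

Lemma is_norm_linf : is_norm linf.
Proof.
split=> [x x0 | a x | x y].
- apply/rowP => i; apply/eqP; rewrite mxE -normr_eq0 eq_le normr_ge0 andbT.
  by rewrite -x0 ler_abs_linf.
- apply/eqP; rewrite eq_le linfZ_le /=.
  have [->|a0] := eqVneq a 0; first by rewrite normr0 mul0r linf_ge0.
  rewrite -ler_pdivlMl ?normr_gt0 // -normrV ?unitfE //.
  by rewrite -[x in linf x](scalerK a0) linfZ_le.
- apply: linf_le => [|i]; first by rewrite addr_ge0 ?linf_ge0.
  by rewrite mxE (le_trans (ler_normD _ _)) // lerD ?ler_abs_linf.
Qed.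

Lemma dominated_linf_delta i : dominated linf (delta_mx 0 i).
Proof. by move=> u; rewrite pairing_deltal (le_trans (ler_norm _)) ?ler_abs_linf. Qed.

Lemma dominated_linf_l1 y : dominated linf y -> \sum_j `|y 0 j| <= 1.
Proof.
move=> yN; set u := \row_j Num.sg (y 0 j).
have u1 : linf u <= 1.
  by apply: linf_le => // j; rewrite mxE normr_sg; case: (y 0 j != 0); rewrite ?ler01.
suff <- : pairing y u = \sum_j `|y 0 j| by exact: le_trans (yN u) u1.
by apply: eq_bigr => j _; rewrite mxE [RHS]normrEsg mulrC.
Qed.

Lemma dominated_linf_delta_eq y i : dominated linf y -> y 0 i = 1 -> y = delta_mx 0 i.
Proof.
move=> yN yi; have := dominated_linf_l1 yN; rewrite (bigD1 i) //= yi normr1 -lerBrDl subrr.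
move=> rest_le0; have rest0 : \sum_(j | j != i) `|y 0 j| = 0.
  by apply/eqP; rewrite eq_le rest_le0 sumr_ge0.
apply/rowP => j; rewrite mxE eqxx /=; have [->|ji] := eqVneq j i; first by rewrite yi.
by apply/eqP; rewrite -normr_eq0 (psumr_eq0P (fun j _ => normr_ge0 _) rest0).
Qed.

Lemma extreme_linf_delta i : extreme_point (dominated linf) (delta_mx 0 i).
Proof.
split=> [|y z t yN zN t0 t1 e]; first exact: dominated_linf_delta.
have coord_le1 w : dominated linf w -> w 0 i <= 1.
  move=> wN; apply: le_trans (ler_norm _) _; apply: le_trans (dominated_linf_l1 wN).
  by rewrite (bigD1 i) //= lerDl sumr_ge0.
have := congr1 (fun w : 'rV[R]_n => w 0 i) e; rewrite !mxE !eqxx /=.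
have := coord_le1 _ yN; have := coord_le1 _ zN => zi yi ei.
have yi1 : y 0 i = 1 by nra.
have zi1 : z 0 i = 1 by nra.
by rewrite (dominated_linf_delta_eq yN yi1) (dominated_linf_delta_eq zN zi1).
Qed.

Lemma delta_mx_inj : injective (fun i : 'I_n => delta_mx 0 i : 'rV[R]_n).
Proof.
move=> i j /(congr1 (fun w : 'rV[R]_n => w 0 i)); rewrite !mxE !eqxx /=.
by have [//|_] := eqVneq i j; move/eqP; rewrite oner_eq0.
Qed.

Lemma delta_mx_neqN i j : delta_mx 0 i != - delta_mx 0 j :> 'rV[R]_n.
Proof.
apply/eqP => /(congr1 (fun w : 'rV[R]_n => w 0 i)); rewrite !mxE !eqxx /=.
by case: (i == j) => /= ?; lra.
Qed.

Lemma linf_dual_extreme : (0 < n)%N ->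
  exactly_n_extreme (dual_unit_ball linf) (2 * n).
Proof.
move=> n0; rewrite dual_unit_ballE; last exact: is_norm_linf.
pose E := [seq delta_mx 0 i : 'rV[R]_n | i <- enum 'I_n].
exists (E ++ map -%R E); split.
- have Euniq : uniq E by rewrite map_inj_uniq ?enum_uniq //; exact: delta_mx_inj.
  rewrite cat_uniq Euniq (map_inj_uniq oppr_inj) Euniq andbT /=.
  apply/hasPn => _ /mapP[_ /mapP[j _ ->] ->].
  by apply/mapP => -[i _ /eqP]; rewrite eq_sym (negbTE (delta_mx_neqN _ _)).
- by rewrite size_cat !size_map -enumT size_enum_ord addnn mul2n.
move=> f; rewrite mem_cat; split; last first.
  case/orP=> /mapP[g /mapP[i _ ->] ->]; first exact: extreme_linf_delta.
  exact/extreme_dominatedN/extreme_linf_delta/is_norm_linf.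
move=> fext; have f0 : f != 0.
  apply: (extreme_dominated_neq0 is_norm_linf (dominated_linf_delta (Ordinal n0)) _ fext).
  by apply/eqP => /rowP/(_ (Ordinal n0)); rewrite !mxE eqxx => /eqP; rewrite oner_eq0.
have fE : f = \sum_i f 0 i *: delta_mx 0 i by rewrite {1}[f]row_sum_delta.
have [i [fi|fi]] := extreme_dominated_signed_comb is_norm_linf fext f0
  (dominated_linf_l1 fext.1) (@dominated_linf_delta) fE.
  by apply/orP; left; apply/mapP; exists i; rewrite ?mem_enum.
by apply/orP; right; apply/mapP; exists (delta_mx 0 i); rewrite ?map_f ?mem_enum // fi opprK.
Qed.

Lemma linf_polyhedral : polyhedral linf.
Proof.
exists [seq \row_i (if b i then 1 else -1) | b : {ffun 'I_n -> bool} <- enum {ffun 'I_n -> bool}].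
move=> x [x1 xext]; have abs1 i : `|x 0 i| = 1.
  apply/eqP; rewrite eq_le (le_trans (ler_abs_linf x i) x1) /= leNgt; apply/negP => xi1.
  set e := 1 - `|x 0 i|; have e0 : 0 < e by rewrite subr_gt0.
  have ball s : `|s| <= e -> unit_ball linf (x + s *: delta_mx 0 i).
    move=> se; apply: linf_le => // j; rewrite !mxE; rewrite /e in se.
    have [->|ji] := eqVneq j i; first by rewrite eqxx mulr1 (le_trans (ler_normD _ _)) //; lra.
    by rewrite andbF mulr0 addr0 (le_trans (ler_abs_linf x j)).
  have e_le : `|e| <= e by rewrite ger0_norm // ltW.
  have Ne_le : `|- e| <= e by rewrite normrN.
  have := extreme_midpoint (conj x1 xext) (ball e e_le) (ball (- e) Ne_le).
  rewrite scaleNr addrACA subrr addr0 scaler_nat mulr2n => /(_ erefl).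
  by move/(congr1 (fun w : 'rV[R]_n => w 0 i)); rewrite !mxE !eqxx /=; lra.
apply/mapP; exists [ffun i => 0 <= x 0 i]; first by rewrite mem_enum.
apply/rowP => i; rewrite !mxE ffunE; have := abs1 i.
by case: (lerP 0 (x 0 i)) => xi; [rewrite ger0_norm | rewrite ltr0_norm // => <-; rewrite opprK].
Qed.

Lemma Pol_linf : (0 < n)%N -> Pol n linf.
Proof. by move=> n0; split; [exact: linf_polyhedral | exact: linf_dual_extreme]. Qed.

End Linf.

Lemma antipodal_transversal (T : zmodType) d (s : seq T) :
  uniq s -> size s = (2 * d)%N -> (forall x, x \in s -> - x \in s) ->
  (forall x, x \in s -> x != - x) ->
  exists f : 'I_d -> T, [/\ forall i, f i \in s, injective f,
    forall i j, f i != - f j & forall x, x \in s -> exists i, x = f i \/ x = - f i].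
Proof.
move=> s_uniq s_size sN s_neqN.
(* f lists the elements of s that occur before their opposite. *)
pose first x := (index x s < index (- x) s)%N.
have firstN x : x \in s -> first (- x) = ~~ first x.
  move=> xs; rewrite /first opprK ltn_neqAle -leqNgt andb_idl // => _.
  apply: contra_neq (s_neqN x xs) => /index_inj eq_x.
  by rewrite eq_x ?sN.
pose t := filter first s.
have t_uniq : uniq t by apply: filter_uniq.
have t_size : size t = d.
  have oppt : perm_eq (map -%R t) (filter (predC first) s).
    apply: uniq_perm; rewrite ?filter_uniq ?(map_inj_uniq oppr_inj) // => y.
    rewrite mem_filter /=; apply/mapP/andP => [[x] | [nfy ys]].
      by rewrite mem_filter => /andP[fx xs] ->; rewrite firstN // fx sN.
    by exists (- y); rewrite ?opprK // mem_filter firstN // nfy sN.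
  have := count_predC first s; rewrite -!size_filter -(perm_size oppt) size_map s_size.
  by rewrite -/t addnn -mul2n => /eqP; rewrite eqn_mul2l => /eqP.
pose f (i : 'I_d) := nth 0 t i.
have f_t i : f i \in t by rewrite mem_nth // t_size.
have in_t y : y \in t -> exists i, y = f i.
  move=> yt; have yd : (index y t < d)%N by rewrite -t_size index_mem.
  by exists (Ordinal yd); rewrite /f nth_index.
exists f; split.
- by move=> i; have := f_t i; rewrite mem_filter => /andP[].
- by move=> i j /eqP; rewrite nth_uniq ?t_size // => /eqP/val_inj.
- move=> i j; apply/eqP => fij; have := f_t i; have := f_t j.
  by rewrite !mem_filter fij => /andP[fj js] /andP[]; rewrite firstN // fj.
move=> x xs; have [fx | nfx] := boolP (first x).
  have [i ->] : exists i, x = f i by apply: in_t; rewrite mem_filter fx.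
  by exists i; left.
have [i xi] : exists i, - x = f i by apply: in_t; rewrite mem_filter firstN // nfx sN.
by exists i; right; rewrite -xi opprK.
Qed.

Section Coordinates.
Variables (R : realType) (k d : nat).

Definition eval_mx (f : 'I_d -> 'rV[R]_k) : 'M[R]_(k, d) := \matrix_(i, j) f j 0 i.

Lemma eval_mxE f x j : (x *m eval_mx f) 0 j = pairing (f j) x.
Proof. by rewrite mxE; apply: eq_bigr => i _; rewrite mxE mulrC. Qed.

Lemma dominated_eval_mx (N : 'rV[R]_k -> R) f j :
  is_emb N (@linf R d) (eval_mx f) -> dominated N (f j).
Proof. by move=> fN x; rewrite -fN -eval_mxE (le_trans (ler_norm _)) // ler_abs_linf. Qed.

Lemma Pol_coordinates (N : 'rV[R]_k -> R) : (0 < d)%N -> is_norm N -> Pol d N ->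
  exists f : 'I_d -> 'rV[R]_k, [/\ forall i, extreme_point (dominated N) (f i),
    injective f, forall i j, f i != - f j & is_emb N (@linf R d) (eval_mx f)].
Proof.
move=> d0 hN [_ [s [s_uniq s_size s_ext]]]; rewrite dual_unit_ballE // in s_ext.
have [g gs g0] : exists2 g, g \in s & g != 0.
  move: s_uniq s_size; case: (s) => [|a [|b s']] /=; try lia.
  rewrite inE negb_or => /andP[/andP[ab _] _] _.
  have [a0|a0] := eqVneq a 0; [exists b | exists a]; rewrite ?inE ?eqxx ?orbT //.
  by rewrite -a0 eq_sym.
have s_neqN x : x \in s -> x != - x.
  move/s_ext/(extreme_dominated_neq0 hN ((s_ext g).2 gs).1 g0) => x0.
  apply: contraNneq x0 => /eqP.
  by rewrite -addr_eq0 -mulr2n -scaler_nat scaler_eq0 pnatr_eq0.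
have sN x : x \in s -> - x \in s by move/s_ext/(extreme_dominatedN hN)/s_ext.
have [f [fs f_inj fN f_cover]] := antipodal_transversal s_uniq s_size sN s_neqN.
have fext i : extreme_point (dominated N) (f i) by apply/s_ext.
exists f; split=> // x; apply/eqP; rewrite eq_le; apply/andP; split.
  apply: linf_le (norm_ge0 hN x) _ => j.
  by rewrite eval_mxE (dominated_abs hN _ (fext j).1).
have [h [hext <-]] := exists_extreme_norming hN x.
have [i [->|->]] := f_cover h ((s_ext h).1 hext); rewrite ?pairingNl;
  by apply: le_trans (ler_norm _) _; rewrite ?normrN -eval_mxE ler_abs_linf.
Qed.

End Coordinates.

Section Lift.
Variables (R : realType) (kF kG d m : nat).
Variables (NF : 'rV[R]_kF -> R) (NG : 'rV[R]_kG -> R).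
Hypotheses (hNF : is_norm NF) (hNG : is_norm NG).
Variables (f : 'I_d -> 'rV[R]_kF) (g : 'I_m -> 'rV[R]_kG) (Phi : 'M[R]_(kF, kG)).
Hypothesis f_ext : forall i, extreme_point (dominated NF) (f i).
Hypothesis f_inj : injective f.
Hypothesis f_neqN : forall i j, f i != - f j.
Hypothesis f_emb : is_emb NF (@linf R d) (eval_mx f).
Hypothesis g_emb : is_emb NG (@linf R m) (eval_mx g).
Hypothesis Phi_emb : is_emb NF NG Phi.

Let h j := g j *m Phi^T.

Let pairing_h j x : pairing (h j) x = pairing (g j) (x *m Phi).
Proof. by rewrite pairing_mulmx. Qed.

Let dominated_h j : dominated NF (h j).
Proof. by move=> x; rewrite pairing_h -Phi_emb (dominated_eval_mx j g_emb). Qed.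

Let coordinate_unique x i i' : x = f i \/ x = - f i -> x = f i' \/ x = - f i' -> i = i'.
Proof.
have f_eq_N a b : f a = - f b -> False by move/eqP; rewrite (negbTE (f_neqN _ _)).
move=> [->|->] [e|e]; first exact: f_inj.
- by case: (f_eq_N _ _ e).
- by case: (f_eq_N _ _ (esym e)).
- exact/f_inj/oppr_inj.
Qed.

Lemma lift_column j : exists a : 'rV[R]_d, [/\ dominated (@linf R d) a,
  forall x, pairing a (x *m eval_mx f) = pairing (h j) x &
  forall i, h j = f i \/ h j = - f i -> a = delta_mx 0 i \/ a = - delta_mx 0 i].
Proof.
have [[i hi] | not_coord] := pselect (exists i, h j = f i \/ h j = - f i).
  have a_coord : forall i', h j = f i' \/ h j = - f i' ->
      delta_mx 0 i = delta_mx 0 i' :> 'rV[R]_d by move=> i' /(coordinate_unique hi) ->.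
  case: hi => hi; [exists (delta_mx 0 i) | exists (- delta_mx 0 i)]; split.
  - exact: dominated_linf_delta.
  - by move=> x; rewrite pairing_deltal eval_mxE hi.
  - by move=> i' /a_coord ->; left.
  - exact/dominatedN/dominated_linf_delta/is_norm_linf.
  - by move=> x; rewrite pairingNl pairing_deltal eval_mxE hi pairingNl.
  - by move=> i' /a_coord ->; right.
have [a [aN aE]] : exists a, dominated (@linf R d) a /\
    forall x, pairing a (x *m eval_mx f) = pairing (h j) x.
  apply: dominated_extension (sublinear_norm (@is_norm_linf R d)) _ => x.
  by rewrite f_emb dominated_h.
by exists a; split=> // i hi; case: not_coord; exists i.
Qed.

Lemma restriction_hits_coordinate i : exists j, h j = f i \/ h j = - f i.
Proof.
have fi0 : f i != 0 by apply: contra_neq (f_neqN i i) => ->; rewrite oppr0.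
have [e [eN eE]] : exists e, dominated NG e /\ forall x, pairing e (x *m Phi) = pairing (f i) x.
  by apply: dominated_extension (sublinear_norm hNG) _ => x; rewrite Phi_emb (f_ext i).1.
have [b [bN bE]] : exists b, dominated (@linf R m) b /\
    forall y, pairing b (y *m eval_mx g) = pairing e y.
  by apply: dominated_extension (sublinear_norm (@is_norm_linf R m)) _ => y; rewrite g_emb.
apply: (extreme_dominated_signed_comb hNF (f_ext i) fi0 (dominated_linf_l1 bN) dominated_h).
apply: pairing_inj => x; rewrite pairing_suml -eE -bE {1}/pairing.
by apply: eq_bigr => j _; rewrite eval_mxE pairingZl pairing_h.
Qed.

Theorem lift_embedding : (0 < d)%N ->
  exists A : 'M[R]_(d, m), is_emb (@linf R d) (@linf R m) A /\ eval_mx f *m A = Phi *m eval_mx g.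
Proof.
move=> d0; have [a a_col] := fin_all_exists lift_column.
exists (eval_mx a); split=> [w | ]; last first.
  apply/row_matrixP => r; rewrite !rowE !mulmxA; apply/rowP => j.
  by have [_ aE _] := a_col j; rewrite !eval_mxE aE pairing_h.
apply/eqP; rewrite eq_le; apply/andP; split.
  apply: linf_le (linf_ge0 _) _ => j; rewrite eval_mxE.
  by have [aN _ _] := a_col j; apply: (dominated_abs (@is_norm_linf R d) _ aN).
have [i ->] := linf_attained w d0; have [j hj] := restriction_hits_coordinate i.
have [_ _ /(_ i hj) aj] := a_col j; apply: le_trans (ler_abs_linf _ j).
by rewrite eval_mxE; case: aj => ->; rewrite ?pairingNl pairing_deltal ?normrN.
Qed.

End Lift.

Lemma emb_linf_leq (R : realType) m n (gamma : 'M[R]_(m, n)) :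
  is_emb (@linf R m) (@linf R n) gamma -> (m <= n)%N.
Proof.
move=> g_emb; have /eqP <- : row_free gamma; last exact: rank_leq_col.
apply: inj_row_free => v vg0; have [v0 _ _] := @is_norm_linf R m; apply: v0.
rewrite -g_emb vg0; apply/eqP; rewrite eq_le linf_ge0 andbT.
by apply: linf_le => // i; rewrite mxE normr0.
Qed.

Section Ramsey.
Variables (R : realType) (d m r : nat) (e : R).
Hypotheses (d0 : (0 < d)%N) (m0 : (0 < m)%N).

Lemma P_pol_P_inf n : P_pol d m r e n -> P_inf d m r e n.
Proof.
case=> _ hpol c.
exact: hpol d _ (is_norm_linf R d) (Pol_linf R d0) m _ (is_norm_linf R m) (Pol_linf R m0) c.
Qed.

Lemma P_inf_P_pol n : (0 < r)%N -> P_inf d m r e n -> P_pol d m r e n.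
Proof.
move=> r0 hinf; split; first by have [gamma [/emb_linf_leq]] := hinf (fun=> Ordinal r0).
move=> kF NF hNF polF kG NG hNG polG c.
have [f [f_ext f_inj f_neqN f_emb]] := Pol_coordinates d0 hNF polF.
have [g [_ _ _ g_emb]] := Pol_coordinates m0 hNG polG.
have [gamma [gamma_emb [i mono]]] := hinf (fun S => c (eval_mx f *m S)).
exists (eval_mx g *m gamma); split=> [y | ]; first by rewrite mulmxA gamma_emb g_emb.
exists i => _ [Phi [Phi_emb ->]].
have [A [A_emb fA]] := lift_embedding hNF hNG f_ext f_inj f_neqN f_emb g_emb Phi_emb d0.
have [S [S_emb cS near]] := mono (A *m gamma) (ex_intro _ A (conj A_emb erefl)).
exists (eval_mx f *m S); split=> // [x | x x1]; first by rewrite mulmxA S_emb f_emb.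
rewrite (_ : _ - _ = eval_mx f *m (A *m gamma - S)); last by rewrite mulmxBr !mulmxA fA.
by rewrite mulmxA near // f_emb.
Qed.

End Ramsey.

Lemma is_least_equiv (P Q : nat -> Prop) n :
  (forall k, P k <-> Q k) -> is_least P n <-> is_least Q n.
Proof. by move=> PQ; split=> -[/PQ Pn Pmin]; split=> // k /PQ; apply: Pmin. Qed.

Theorem proposition6p31 (R : realType) (d m r : nat) (e : R) :
  (0 < d)%N -> (0 < m)%N -> (0 < r)%N -> 0 < e ->
  forall n : nat, is_least (P_pol d m r e) n <-> is_least (P_inf d m r e) n.
Proof.
(* The two Ramsey properties coincide for every e, positive or not. *)
move=> d0 m0 r0 _ n; apply: is_least_equiv => k.
by split; [exact: P_pol_P_inf | exact: P_inf_P_pol].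
Qed.
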